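(* Let $X_1,X_2,\dots$ be iid real random variables with common continuous distribution function $F$, and suppose $F\in\mathcal{D}(G)$ with norming constants $a_n>0$, $b_n\in\mathbb{R}$. Then for every $x\in\mathbb{R}$ (at which $G$ is continuous), \[ \Pr\left(\frac{X_n-b_n}{a_n}\le x\ \Big|\ X_n\text{ is a record}\right)\to G(x),\qquad n\to\infty. \]
   Context: $X_m$ is a record if $X_m>\max(X_1,\dots,X_{m-1})$; $X_1$ is always a record. $F\in\mathcal{D}(G)$ (max-domain of attraction) means that there exist $a_n>0$, $b_n\in\mathbb{R}$ with $F^n(a_nx+b_n)\to G(x)$ as $n\to\infty$ at all continuity points $x$ of a non-degenerate distribution function $G$; then $G$ is a univariate extreme value distribution $G_\alpha(x)=\exp(-(1+\alpha x)^{-1/\alpha})$, $1+\alpha x>0$ (with $G_0(x)=\exp(-e^{-x})$), up to location and scale. *)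

From HB Require Import structures.
From mathcomp Require Import all_boot all_order all_algebra.
From mathcomp Require Import all_classical all_reals all_analysis.
Set Implicit Arguments. Unset Strict Implicit. Unset Printing Implicit Defensive.
Import Order.TTheory GRing.Theory Num.Theory.
Import numFieldNormedType.Exports.
Local Open Scope classical_set_scope.
Local Open Scope ring_scope.

(* The sequence X_1, X_2, ... is indexed by positive naturals; X 0 is ignored. *)

Definition mutually_independent_from1 d (T : measurableType d) (R : realType)
  (P : probability T R) (X : nat -> {RV P >-> R}) : Prop :=
  forall (s : seq nat), uniq s -> all (fun i => (0 < i)%N) s ->
  forall (B : nat -> set R), (forall i, measurable (B i)) ->
  P (\bigcap_(i in [set` s]) (X i @^-1` B i)) =
  \big[*%E/1%E]_(i <- s) P (X i @^-1` B i).

Definition iid_with_df d (T : measurableType d) (R : realType)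
  (P : probability T R) (X : nat -> {RV P >-> R}) (F : R -> R) : Prop :=
  mutually_independent_from1 X /\
  (forall n, (0 < n)%N -> forall x : R, cdf (X n) x = (F x)%:E).

Definition is_distribution_function (R : realType) (G : R -> R) : Prop :=
  {homo G : x y / x <= y} /\
  (forall x : R, G @ x^'+ --> G x) /\
  G @ -oo --> (0 : R) /\
  G @ +oo --> (1 : R).

Definition nondegenerate (R : realType) (G : R -> R) : Prop :=
  exists x : R, 0 < G x < 1.

Definition max_domain_of_attraction (R : realType) (F G : R -> R)
  (a b : nat -> R) : Prop :=
  (forall n, (0 < n)%N -> 0 < a n) /\
  is_distribution_function G /\ nondegenerate G /\
  (forall x : R, {for x, continuous G} ->
     (fun n => F (a n * x + b n) ^+ n) @ \oo --> G x).

Definition is_record d (T : measurableType d) (R : realType)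
  (P : probability T R) (X : nat -> {RV P >-> R}) (n : nat) : set T :=
  [set w | forall m, (0 < m < n)%N -> X m w < X n w].

Definition cond_prob d (T : measurableType d) (R : realType)
  (P : probability T R) (A B : set T) : R :=
  fine (P (A `&` B)) / fine (P B).

(* Let p(s) be the probability that X_(k+1) <= s and X_(k+1) is a record.
   Splitting according to whether X_(k+1) lies in ]s, t], independence shows
   that p(t) - p(s) lies between (F t - F s) F(s)^k and (F t - F s) F(t)^k:
   the lower and upper Riemann-Stieltjes sums of the integral of u^k du over
   [F s, F t].  Since F is continuous, it takes every value in ]0, F s], so
   these sums can be made arbitrarily fine and p = F^(k+1) / (k+1).  Letting
   s go to +oo gives P(X_(k+1) is a record) = 1 / (k+1), hence the conditional
   probability in the theorem is exactly F(a_n x + b_n)^n, which tends to G(x)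
   by the domain-of-attraction hypothesis. *)

From HB Require Import structures.
From mathcomp Require Import all_boot all_order all_algebra.
From mathcomp Require Import all_classical all_reals all_analysis.
From mathcomp Require Import measurable_realfun ring lra.
Import Order.TTheory GRing.Theory Num.Theory.
Import numFieldNormedType.Exports.
Local Open Scope classical_set_scope.
Local Open Scope ring_scope.

Set Implicit Arguments.
Unset Strict Implicit.
Unset Printing Implicit Defensive.

Lemma subrX_div_bounds (R : realFieldType) (u v : R) k : 0 <= v <= u ->
  (u - v) * v ^+ k <= (u ^+ k.+1 - v ^+ k.+1) / k.+1%:R <= (u - v) * u ^+ k.
Proof.
move=> /andP[v0 vu]; have u0 := le_trans v0 vu.
have Xle j : v ^+ j <= u ^+ j by rewrite lerXn2r ?nnegrE.
have mid i : (i <= k)%N -> v ^+ k <= u ^+ (k - i) * v ^+ i <= u ^+ k.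
  move=> ik; have split_k w : w ^+ k = w ^+ (k - i) * w ^+ i.
    by rewrite -exprD subnK.
  by rewrite !split_k ler_wpM2r ?exprn_ge0 ?Xle // ler_wpM2l ?exprn_ge0 ?Xle.
have k0 : 0 < k.+1%:R :> R by rewrite ltr0n.
have sum_const w : w * k.+1%:R = \sum_(i < k.+1) w.
  by rewrite sumr_const card_ord mulr_natr.
rewrite ler_pdivlMr // ler_pdivrMr // subrXX -!mulrA !ler_wpM2l ?subr_ge0 //.
all: by rewrite sum_const; apply: ler_sum => i _; case/andP: (mid i (leq_ord i)).
Qed.

Section pinched_increments.
Variables (R : archiRealFieldType) (c p : R -> R) (k : nat).
Hypothesis c_ge0 : forall s, 0 <= c s.
Hypothesis c_le1 : forall s, c s <= 1.
Hypothesis c_nondecreasing : {homo c : s t / s <= t}.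
Hypothesis c_level : forall s v, 0 < v <= c s -> exists2 s', s' <= s & c s' = v.
Hypothesis p_bounds : forall s, 0 <= p s <= c s ^+ k.+1.
Hypothesis p_increment : forall s t, s <= t ->
  p s + (c t - c s) * c s ^+ k <= p t <= p s + (c t - c s) * c t ^+ k.

Let dev s := p s - c s ^+ k.+1 / k.+1%:R.

Lemma dev_increment s t : s <= t ->
  `|dev t - dev s| <= (c t - c s) * (c t ^+ k - c s ^+ k).
Proof.
move=> st; have /andP[p_lo p_hi] := p_increment st.
have /andP[i_lo i_hi] :=
  subrX_div_bounds k (introT andP (conj (c_ge0 s) (c_nondecreasing st))).
have -> : dev t - dev s = p t - p s - (c t ^+ k.+1 - c s ^+ k.+1) / k.+1%:R.
  by rewrite /dev; ring.
rewrite ler_norml mulrBr; move: p_lo p_hi i_lo i_hi.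
set L := (c t - c s) * c s ^+ k; set U := (c t - c s) * c t ^+ k.
set I := (_ - _) / _; move=> *; apply/andP; split; lra.
Qed.

Lemma dev_bound s : `|dev s| <= c s.
Proof.
have /andP[p0 p1] := p_bounds s.
have k0 : 0 < k.+1%:R :> R by rewrite ltr0n.
have ck1 : c s ^+ k.+1 <= c s by rewrite exprS ler_piMr // exprn_ile1.
have q0 : 0 <= c s ^+ k.+1 / k.+1%:R by rewrite divr_ge0 ?exprn_ge0.
have q1 : c s ^+ k.+1 / k.+1%:R <= c s ^+ k.+1.
  by rewrite ler_pdivrMr // ler_peMr ?exprn_ge0 // ler1n.
rewrite ler_norml /dev; move: q0 q1 p1 ck1; set q := _ / _; set x := _ ^+ _.
by move=> *; apply/andP; split; lra.
Qed.

(* Climb the levels c t * j / N, j = 1 .. N, reached through [c_level]: the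
   increment bounds of consecutive levels telescope. *)
Lemma dev_grid t N : 0 < c t -> (0 < N)%N -> forall j s, (0 < j <= N)%N ->
  c s = c t * j%:R / N%:R -> `|dev s| <= c t / N%:R * (1 + c s ^+ k).
Proof.
move=> ct0 N0; have Npos : 0 < N%:R :> R by rewrite ltr0n.
have step_ge0 : 0 <= c t / N%:R by rewrite divr_ge0 ?ltW.
elim=> [//|[|j] IH] s /andP[_ jN] cs.
  apply: le_trans (dev_bound s) _; rewrite cs mulr1 ler_peMr //.
  by rewrite lerDl exprn_ge0.
have v0 : 0 < c t * j.+1%:R / N%:R by rewrite divr_gt0 // mulr_gt0 // ltr0n.
have vs : c t * j.+1%:R / N%:R <= c s.
  by rewrite cs ler_pM2r ?invr_gt0 // ler_pM2l // ler_nat.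
have [s' s's cs'] := c_level (introT andP (conj v0 vs)).
have IH' := IH s' (ltnW jN) cs'.
have incr := dev_increment s's.
have dc : c s - c s' = c t / N%:R.
  by rewrite cs cs' -[j.+2]addn1 natrD; field; rewrite lt0r_neq0.
rewrite dc in incr.
have tri : `|dev s| <= `|dev s'| + `|dev s - dev s'|.
  by have := ler_normD (dev s') (dev s - dev s'); rewrite addrC subrK.
move: tri IH' incr; rewrite mulrBr mulrDr mulr1; lra.
Qed.

Lemma pinched_increments_eq s : p s = c s ^+ k.+1 / k.+1%:R.
Proof.
apply/eqP; rewrite -subr_eq0 -normr_le0; have [cs0|cs0] := eqVneq (c s) 0.
  by rewrite -cs0 dev_bound.
have cs_gt0 : 0 < c s by rewrite lt0r cs0 c_ge0.
apply/ler_addgt0Pr => e e0; rewrite add0r -/(dev s).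
pose N := (Num.truncn (2 / e)).+1.
have Npos : 0 < N%:R :> R by rewrite ltr0n.
have csN : c s = c s * N%:R / N%:R by rewrite mulfK // lt0r_neq0.
have := @dev_grid s N cs_gt0 (ltn0Sn _) N s (leqnn N) csN.
move/le_trans; apply; apply: le_trans (_ : 2 / N%:R <= e).
  rewrite mulrAC ler_pM2r ?invr_gt0 // -[2]/(1 + 1 : R) mulrDr mulr1.
  by rewrite lerD // mulr_ile1 ?exprn_ge0 ?exprn_ile1.
by rewrite ler_pdivrMr // mulrC -ler_pdivrMr // ltW // truncnS_gt.
Qed.

End pinched_increments.

Section records.
Context d (T : measurableType d) (R : realType) (P : probability T R)
  (X : nat -> {RV P >-> R}).

Definition prefix_max_le k r := [set w | forall m, (0 < m < k.+1)%N -> X m w <= r].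

Definition record_le k s := X k.+1 @^-1` `]-oo, s] `&` is_record X k.+1.

Lemma measurable_prefix_max_le k r : measurable (prefix_max_le k r).
Proof.
have -> : prefix_max_le k r =
    \bigcap_(m in [set m | (0 < m < k.+1)%N]) X m @^-1` `]-oo, r].
  by apply/seteqP; split=> w h m /h; rewrite /= in_itv.
by apply: bigcap_measurableType => m _; exact: measurable_funPTI.
Qed.

Lemma measurable_is_record n : measurable (is_record X n).
Proof.
have -> : is_record X n =
    \bigcap_(m in [set m | (0 < m < n)%N]) [set w | X m w < X n w].
  by apply/seteqP; split=> w h m /h.
apply: bigcap_measurableType => m _; rewrite -[X in measurable X]setTI.
exact: (measurable_fun_ltr (measurable_funPT (X m)) (measurable_funPT (X n))).
Qed.

Lemma measurable_record_le k s : measurable (record_le k s).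
Proof. exact: measurableI (measurable_funPTI _ _) (measurable_is_record _). Qed.

Variable F : R -> R.
Hypothesis XF : iid_with_df X F.

Lemma probability_Xle m r : (0 < m)%N -> P (X m @^-1` `]-oo, r]) = (F r)%:E.
Proof. by move=> m0; exact: XF.2 m m0 r. Qed.

Lemma F_ge0 r : 0 <= F r.
Proof. by rewrite -lee_fin -(probability_Xle r (ltn0Sn 0)). Qed.

Lemma F_le1 r : F r <= 1.
Proof. by rewrite -lee_fin -(probability_Xle r (ltn0Sn 0)); exact: cdf_le1. Qed.

Lemma F_nondecreasing : {homo F : s t / s <= t}.
Proof.
move=> s t st; rewrite -lee_fin -!(probability_Xle _ (ltn0Sn 0)).
exact: cdf_nondecreasing.
Qed.

Let F_fineE : F = fine \o cdf (X 1).
Proof. by apply/funext => r /=; rewrite (XF.2 1 (ltn0Sn 0) r). Qed.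

Lemma F_cvgNy : F r @[r --> -oo] --> 0.
Proof. by rewrite F_fineE; apply: fine_cvg; exact: cvg_cdfNy0. Qed.

Lemma F_cvgy : F r @[r --> +oo] --> (1 : R).
Proof. by rewrite F_fineE; apply: fine_cvg; exact: cvg_cdfy1. Qed.

Lemma probability_Xgt m r : (0 < m)%N -> P (X m @^-1` `]r, +oo[) = (1 - F r)%:E.
Proof.
move=> m0; rewrite -setCitvl preimage_setC probability_setC ?probability_Xle //.
exact: (measurable_funPTI (X m) (measurable_itv `]-oo, r])).
Qed.

Lemma probability_Xitv m s t : (0 < m)%N -> s <= t ->
  P (X m @^-1` `]s, t]) = (F t - F s)%:E.
Proof.
move=> m0 st.
have -> : X m @^-1` `]s, t] = X m @^-1` `]-oo, t] `\` X m @^-1` `]-oo, s].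
  apply/seteqP; split=> w /=; rewrite !in_itv /=.
    by move=> /andP[sw ->]; split => //; apply/negP; rewrite -ltNge.
  by move=> [-> /negP]; rewrite -ltNge => ->.
have mXle r : measurable (X m @^-1` `]-oo, r]) by exact: measurable_funPTI.
rewrite (measureD (mXle t) (mXle s)) ?setIidr.
- by rewrite EFinB -!(probability_Xle _ m0).
- by move=> w /=; rewrite !in_itv /= => ws; exact: le_trans ws st.
- exact: le_lt_trans (probability_le1 _ (mXle t)) (ltry 1).
Qed.

Lemma probability_X_prefix_max_le k A r : measurable A ->
  P (X k.+1 @^-1` A `&` prefix_max_le k r) = (P (X k.+1 @^-1` A) * (F r ^+ k)%:E)%E.
Proof.
move=> mA; pose B i : set R := if i == k.+1 then A else `]-oo, r]%classic.
have mB i : measurable (B i) by rewrite /B; case: ifP.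
have s_uniq : uniq (k.+1 :: iota 1 k) by rewrite /= iota_uniq mem_iota ltnn andbF.
have s_pos : all (fun i => (0 < i)%N) (k.+1 :: iota 1 k).
  by apply/allP => i; rewrite inE mem_iota => /orP[/eqP ->|/andP[]].
have earlier i : (i \in iota 1 k) = (0 < i < k.+1)%N by rewrite mem_iota add1n.
have := XF.1 _ s_uniq s_pos _ mB.
have -> : \bigcap_(i in [set` k.+1 :: iota 1 k]) X i @^-1` B i =
    X k.+1 @^-1` A `&` prefix_max_le k r.
  apply/seteqP; split=> w.
    move=> h; split.
      by have := h k.+1; rewrite /B eqxx; apply; rewrite /= inE eqxx.
    move=> i /= ik; have := h i.
    rewrite /B (ltn_eqF (proj2 (andP ik))) /= in_itv; apply.
    by rewrite /= inE earlier ik orbT.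
  move=> [wA wr] i /=; rewrite inE earlier /B => /orP[/eqP ->|ik].
    by rewrite eqxx.
  by rewrite ltn_eqF ?(proj2 (andP ik)) //= in_itv /= wr.
move=> ->; rewrite big_cons /B eqxx; congr (_ * _)%E.
rewrite (eq_big_seq (fun=> (F r)%:E)) => [|i]; last first.
  by rewrite earlier => /andP[i0 ik]; rewrite ltn_eqF // probability_Xle.
by rewrite prodEFin big_const_seq count_predT size_iota iter_mulr_1.
Qed.

Let band k s t r := X k.+1 @^-1` `]s, t] `&` prefix_max_le k r.

Let measurable_band k s t r : measurable (band k s t r).
Proof. exact: measurableI (measurable_funPTI _ _) (measurable_prefix_max_le _ _). Qed.

Let probability_band k s t r : s <= t ->
  P (band k s t r) = ((F t - F s) * F r ^+ k)%:E.
Proof.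
by move=> st; rewrite probability_X_prefix_max_le ?probability_Xitv.
Qed.

Lemma record_le_increment_lb k s t : s <= t ->
  (P (record_le k s) + ((F t - F s) * F s ^+ k)%:E <= P (record_le k t))%E.
Proof.
move=> st; have mRs := measurable_record_le k s; have mB := measurable_band k s t s.
rewrite -probability_band // -measureU //.
- apply: le_measure; rewrite ?inE; [exact: measurableU|exact: measurable_record_le|].
  move=> w [[/= ws rec]|[/= /andP[sw wt] low]]; split => //=.
  + by rewrite in_itv /= in ws *; exact: le_trans ws st.
  + by move=> m mk; exact: le_lt_trans (low m mk) sw.
- apply/seteqP; split => // w [[/= ws _] [/= + _]].
  by rewrite !in_itv /= in ws * => /andP[sw _]; rewrite leNgt sw in ws.
Qed.

Lemma record_le_increment_ub k s t : s <= t ->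
  (P (record_le k t) <= P (record_le k s) + ((F t - F s) * F t ^+ k)%:E)%E.
Proof.
move=> st; have mRs := measurable_record_le k s; have mB := measurable_band k s t t.
rewrite -probability_band //; apply: le_trans (measureU2 _ mRs mB).
apply: le_measure; rewrite ?inE; [exact: measurable_record_le|exact: measurableU|].
move=> w [/= wt rec]; rewrite in_itv /= in wt.
have low m : (0 < m < k.+1)%N -> X m w <= t.
  by move=> mk; exact/ltW/(lt_le_trans (rec m mk)).
by case: (leP (X k.+1 w) s) => ws; [left|right]; split; rewrite //= in_itv /= ?ws ?wt.
Qed.

Lemma record_le_ub k t : (P (record_le k t) <= (F t ^+ k.+1)%:E)%E.
Proof.
rewrite exprS EFinM -(probability_Xle _ (ltn0Sn k)) -probability_X_prefix_max_le //.
apply: le_measure; rewrite ?inE; [exact: measurable_record_le|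
  exact: measurableI (measurable_funPTI _ _) (measurable_prefix_max_le _ _)|].
move=> w [/= wt rec]; split => // m mk; rewrite /= in_itv /= in wt.
exact/ltW/(lt_le_trans (rec m mk)).
Qed.

Lemma F_lt_ex v : 0 < v -> exists t, F t < v.
Proof.
move=> v0; apply: (filter_ex (FF := proper_ninfty_nbhs)).
exact: (cvgr_lt (FF := @filter_filter _ _ proper_ninfty_nbhs) _ F_cvgNy _ v0).
Qed.

Lemma F_gt_ex v : v < 1 -> exists t, v < F t.
Proof.
move=> v1; apply: (filter_ex (FF := proper_pinfty_nbhs)).
exact: (cvgr_gt (FF := @filter_filter _ _ proper_pinfty_nbhs) _ F_cvgy _ v1).
Qed.

Lemma probability_is_record_bounds k t :
  (P (record_le k t) <= P (is_record X k.+1) <= P (record_le k t) + (1 - F t)%:E)%E.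
Proof.
have mR := measurable_is_record k.+1; have mRt := measurable_record_le k t.
have mXgt : measurable (X k.+1 @^-1` `]t, +oo[) by exact: measurable_funPTI.
apply/andP; split; first by apply: le_measure; rewrite ?inE // => w [].
rewrite -(probability_Xgt _ (ltn0Sn k)); apply: le_trans (measureU2 _ mRt mXgt).
apply: le_measure; rewrite ?inE //; first exact: measurableU.
move=> w rec; case: (leP (X k.+1 w) t) => wt; [left|right].
  by split; rewrite //= in_itv.
by rewrite /= in_itv /= wt.
Qed.

Hypothesis F_continuous : continuous F.

Lemma F_level s v : 0 < v <= F s -> exists2 s', s' <= s & F s' = v.
Proof.
move=> /andP[v0 vs]; have [y Fy] := F_lt_ex v0.
pose y' := Num.min y s.
have y's : y' <= s by rewrite ge_min lexx orbT.
have Fy' : F y' <= v.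
  by apply/ltW/(le_lt_trans _ Fy)/F_nondecreasing; rewrite ge_min lexx.
have := IVT y's (continuous_subspaceT F_continuous).
rewrite (min_idPl (F_nondecreasing y's)) (max_idPr (F_nondecreasing y's)).
case/(_ v); first by rewrite Fy' vs.
by move=> c; rewrite in_itv /= => /andP[_ cs] Fc; exists c.
Qed.

Lemma probability_record_le k s : P (record_le k s) = (F s ^+ k.+1 / k.+1%:R)%:E.
Proof.
pose p s := fine (P (record_le k s)).
have pE s' : P (record_le k s') = (p s')%:E.
  by rewrite fineK // fin_num_measure //; exact: measurable_record_le.
rewrite pE; congr _%:E.
apply: (pinched_increments_eq F_ge0 F_le1 F_nondecreasing F_level) => [s'|s' t st].
  by rewrite -!lee_fin -pE measure_ge0 record_le_ub.
by rewrite -!lee_fin !EFinD -!pE record_le_increment_lb // record_le_increment_ub.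
Qed.

Lemma probability_is_record k : P (is_record X k.+1) = (k.+1%:R^-1)%:E.
Proof.
have qE : P (is_record X k.+1) = (fine (P (is_record X k.+1)))%:E.
  by rewrite fineK // fin_num_measure //; exact: measurable_is_record.
rewrite qE; congr _%:E.
apply/eqP; rewrite -subr_eq0 -normr_le0; apply/ler_addgt0Pr => e e0; rewrite add0r.
have [t Ft] : exists t, 1 - e < F t by apply: F_gt_ex; rewrite ltrBlDl ltrDr.
have /andP[lo hi] := probability_is_record_bounds k t.
rewrite qE probability_record_le -EFinD !lee_fin in lo hi.
have k0 : 0 < k.+1%:R :> R by rewrite ltr0n.
have /andP[_ gap] := subrX_div_bounds k (introT andP (conj (F_ge0 t) (F_le1 t))).
have below1 : F t ^+ k.+1 / k.+1%:R <= k.+1%:R^-1.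
  by rewrite ler_pdivrMr // mulVf ?lt0r_neq0 // exprn_ile1 ?F_ge0 ?F_le1.
rewrite !expr1n mulr1 mulrBl mul1r in gap; move: lo hi gap below1 Ft.
set a := F t ^+ k.+1 / _; set b := k.+1%:R^-1; set q := fine _.
by move=> *; rewrite ler_norml; apply/andP; split; lra.
Qed.

Lemma cond_prob_record_le k s :
  cond_prob P (X k.+1 @^-1` `]-oo, s]) (is_record X k.+1) = F s ^+ k.+1.
Proof.
rewrite /cond_prob -/(record_le k s) probability_record_le probability_is_record /=.
by rewrite invrK divfK // pnatr_eq0.
Qed.

End records.

Theorem lemma7 (d : measure_display) (T : measurableType d) (R : realType)
  (P : probability T R) (X : nat -> {RV P >-> R}) (F G : R -> R)
  (a b : nat -> R) :
  iid_with_df X F ->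
  continuous F ->
  max_domain_of_attraction F G a b ->
  forall x : R, {for x, continuous G} ->
  (fun n => cond_prob P [set w | (X n w - b n) / a n <= x] (is_record X n))
    @ \oo --> G x.
Proof.
move=> XF F_cont [a_gt0 [_ [_ F_attr]]] x Gx; apply: cvg_trans (F_attr x Gx).
apply: near_eq_cvg; exists 1%N => // -[//|n] _ /=.
have -> : [set w | (X n.+1 w - b n.+1) / a n.+1 <= x] =
    X n.+1 @^-1` `]-oo, a n.+1 * x + b n.+1].
  by apply/seteqP; split=> w; rewrite /= in_itv /= ler_pdivrMr ?a_gt0 // lerBlDr mulrC.
by rewrite (cond_prob_record_le XF F_cont).
Qed.
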